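(* Let $(T,\eta,\mu)$ be a BC monad on $\mathsf{Set}$ and $(A,e)$ any $T$-algebra. Then the partial evaluation relation on $TA$ is transitive.
   Context: A monad $(T,\eta,\mu)$ on $\mathsf{Set}$ is BC if the functor $T$ preserves weak pullbacks and $\mu$ is weakly cartesian, i.e. every naturality square of $\mu$ is a weak pullback. A commutative square $A\to B\to D$, $A\to C\to D$ in $\mathsf{Set}$ (maps $f:A\to B$, $g:A\to C$, $m:B\to D$, $n:C\to D$) is a weak pullback if for all $b\in B$, $c\in C$ with $m(b)=n(c)$ there exists $a\in A$ with $f(a)=b$, $g(a)=c$ (uniqueness not required). For a $T$-algebra $(A,e)$, $t_0\in TA$ partially evaluates to $t_1\in TA$ if there is $\tau\in TTA$ with $\mu_A(\tau)=t_0$ and $(Te)(\tau)=t_1$; the partial evaluation relation is the set of such pairs $(t_0,t_1)$. *)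

Set Implicit Arguments.

Record monad := Monad {
  T :> Type -> Type;
  fmap : forall A B : Type, (A -> B) -> T A -> T B;
  eta : forall A : Type, A -> T A;
  mu : forall A : Type, T (T A) -> T A;
  fmap_id : forall (A : Type) (t : T A), fmap (fun x => x) t = t;
  fmap_comp : forall (A B C : Type) (f : A -> B) (g : B -> C) (t : T A),
      fmap (fun x => g (f x)) t = fmap g (fmap f t);
  eta_nat : forall (A B : Type) (f : A -> B) (a : A),
      fmap f (eta a) = eta (f a);
  mu_nat : forall (A B : Type) (f : A -> B) (t : T (T A)),
      fmap f (mu t) = mu (fmap (fmap f) t);
  mu_eta_l : forall (A : Type) (t : T A), mu (eta t) = t;
  mu_eta_r : forall (A : Type) (t : T A), mu (fmap (@eta A) t) = t;
  mu_assoc : forall (A : Type) (t : T (T (T A))),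
      mu (mu t) = mu (fmap (@mu A) t)
}.

Definition weak_pullback (P B C D : Type)
    (f : P -> B) (g : P -> C) (m : B -> D) (n : C -> D) : Prop :=
  forall (b : B) (c : C), m b = n c -> exists a : P, f a = b /\ g a = c.

Definition preserves_weak_pullbacks (M : monad) : Prop :=
  forall (P B C D : Type) (f : P -> B) (g : P -> C) (m : B -> D) (n : C -> D),
    (forall p, m (f p) = n (g p)) ->
    weak_pullback f g m n ->
    weak_pullback (fmap M f) (fmap M g) (fmap M m) (fmap M n).

Definition mu_weakly_cartesian (M : monad) : Prop :=
  forall (A B : Type) (f : A -> B),
    weak_pullback (@mu M A) (fmap M (fmap M f)) (fmap M f) (@mu M B).

Definition BC (M : monad) : Prop :=
  preserves_weak_pullbacks M /\ mu_weakly_cartesian M.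

Definition is_algebra (M : monad) (A : Type) (e : M A -> A) : Prop :=
  (forall a : A, e (@eta M A a) = a) /\
  (forall t : M (M A), e (@mu M A t) = e (@fmap M (M A) A e t)).

Definition partial_eval (M : monad) (A : Type) (e : M A -> A) (t0 t1 : M A)
    : Prop :=
  exists tau : M (M A), @mu M A tau = t0 /\ @fmap M (M A) A e tau = t1.

From Stdlib Require Import FunctionalExtensionality.

(* If t0 partially evaluates to t1 via tau and t1 to t2 via sigma, then
   T e tau = t1 = mu sigma, so weak cartesianness of the naturality square of
   mu at e yields Theta in TTTA with mu Theta = tau and TTe Theta = sigma.
   Flattening the middle layer, T mu Theta, witnesses t0 ~> t2: its
   multiplication is mu (mu Theta) = t0 by associativity, and its evaluation
   is T e (TTe Theta) = t2 by the multiplication law of the algebra. *)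

Lemma fmap_ext (M : monad) (A B : Type) (f g : A -> B) (t : M A) :
  (forall x, f x = g x) -> fmap M f t = fmap M g t.
Proof.
  intros fg. f_equal. apply functional_extensionality. exact fg.
Qed.

Lemma partial_eval_flatten (M : monad) (A : Type) (e : M A -> A) :
  (forall t : M (M A), e (@mu M A t) = e (fmap M e t)) ->
  forall Theta : M (M (M A)),
    partial_eval M e (@mu M A (@mu M (M A) Theta))
      (fmap M e (fmap M (fmap M e) Theta)).
Proof.
  intros e_mu Theta. exists (fmap M (@mu M A) Theta). split.
  - symmetry. apply mu_assoc.
  - rewrite <- !fmap_comp. apply fmap_ext. intro t. apply e_mu.
Qed.

Theorem proposition3p6 :
  forall (M : monad), BC M ->
  forall (A : Type) (e : M A -> A), is_algebra M e ->
  forall t0 t1 t2 : M A,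
    partial_eval M e t0 t1 -> partial_eval M e t1 t2 -> partial_eval M e t0 t2.
Proof.
  intros M [_ mu_cart] A e [_ e_mu] t0 t1 t2
    [tau [tau_mu tau_e]] [sigma [sigma_mu sigma_e]].
  destruct (mu_cart (M A) A e tau sigma) as [Theta [Theta_mu Theta_e]].
  { rewrite tau_e, sigma_mu. reflexivity. }
  rewrite <- tau_mu, <- sigma_e, <- Theta_mu, <- Theta_e.
  apply partial_eval_flatten. exact e_mu.
Qed.
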